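(* Let $\mathcal{C}=\{C_1,\dots,C_k\}\subset\mathbb{P}^2_{\mathbb{C}}$ be a $d$-arrangement of $k\geq 3$ curves with $t_k=0$. Then the Levi graph $G$ of $\mathcal{C}$ contains an induced cycle of length $6$.
   Context: A $d$-arrangement is an arrangement $\mathcal{C}=\{C_1,\dots,C_k\}$ of $k\geq 3$ smooth plane curves all of the same degree $d\geq 1$ such that the singular locus $\mathrm{Sing}(\mathcal{C})$ consists only of ordinary intersection points (locally like intersections of lines). For $r\geq 2$, $t_r$ denotes the number of points of $\mathrm{Sing}(\mathcal{C})$ lying on exactly $r$ curves of $\mathcal{C}$; thus $t_k=0$ means no point lies on all $k$ curves. The Levi graph of $\mathcal{C}$ is the bipartite graph with one vertex for each point $p\in\mathrm{Sing}(\mathcal{C})$, one vertex for each curve $C_j$, and an edge between the vertex of $p$ and the vertex of $C_j$ iff $p\in C_j$. *)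

(* complex numbers = R[i] (real_closed) over an abstract
   R : realType (any realType is the field of real numbers up to isomorphism);
   plane curves = homogeneous polynomials in {mpoly C[3]} (multinomials). *)
From HB Require Import structures.
From mathcomp Require Import all_boot all_order all_algebra.
From mathcomp Require Import reals.
From mathcomp.real_closed Require Import complex.
From mathcomp.multinomials Require Import mpoly.

Set Implicit Arguments.
Unset Strict Implicit.
Unset Printing Implicit Defensive.
Import GRing.Theory.
Local Open Scope ring_scope.

Section Arrangements.
Variable C : fieldType.

(* Points of P^2(C) are represented by nonzero homogeneous coordinate vectors;
   two such vectors represent the same point iff they are proportional. *)
Definition nonzero_pt (v : 'I_3 -> C) : Prop := exists i, v i != 0.

Definition proj_eq (v w : 'I_3 -> C) : Prop :=
  exists c : C, forall i, w i = c * v i.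

Definition on_curve (F : {mpoly C[3]}) (v : 'I_3 -> C) : Prop := F.@[v] = 0.

Definition grad (F : {mpoly C[3]}) (v : 'I_3 -> C) : 'I_3 -> C :=
  fun i => (mderiv i F).@[v].

Definition smooth_curve (d : nat) (F : {mpoly C[3]}) : Prop :=
  [/\ F \is d.-homog, F != 0 &
      forall v, nonzero_pt v -> exists i, grad F v i != 0].

Definition transversal_at (F G : {mpoly C[3]}) (v : 'I_3 -> C) : Prop :=
  ~ (exists c : C, forall i, grad F v i = c * grad G v i).

Variables (k : nat) (F : 'I_k -> {mpoly C[3]}).

(* a d-arrangement of k >= 3 distinct smooth curves of degree d >= 1 whose
   singular locus consists of ordinary intersection points (the curves
   through any singular point have pairwise distinct tangents) *)
Definition d_arrangement (d : nat) : Prop :=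
  [/\ (3 <= k)%N, (1 <= d)%N,
      forall j, smooth_curve d (F j),
      forall i j, i != j ->
        ~ (forall v, nonzero_pt v -> (on_curve (F i) v <-> on_curve (F j) v)) &
      forall i j v, i != j -> nonzero_pt v ->
        on_curve (F i) v -> on_curve (F j) v -> transversal_at (F i) (F j) v].

(* t_k = 0 : no point lies on all k curves *)
Definition tk_zero : Prop :=
  ~ (exists v, nonzero_pt v /\ forall j, on_curve (F j) v).

Definition in_sing (v : 'I_3 -> C) : Prop :=
  nonzero_pt v /\ exists i j, i != j /\ on_curve (F i) v /\ on_curve (F j) v.

Inductive levi_vertex : Type :=
  | LPoint of ('I_3 -> C)
  | LCurve of 'I_k.

Definition levi_vertex_ok (x : levi_vertex) : Prop :=
  match x with LPoint v => in_sing v | LCurve _ => True end.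

Definition levi_same (x y : levi_vertex) : Prop :=
  match x, y with
  | LPoint v, LPoint w => proj_eq v w
  | LCurve i, LCurve j => i = j
  | _, _ => False
  end.

Definition levi_adj (x y : levi_vertex) : Prop :=
  match x, y with
  | LPoint v, LCurve j => on_curve (F j) v
  | LCurve j, LPoint v => on_curve (F j) v
  | _, _ => False
  end.

Definition levi_induced_cycle (n : nat) (x : 'I_n -> levi_vertex) : Prop :=
  [/\ (3 <= n)%N,
      forall i, levi_vertex_ok (x i),
      forall i j, i != j -> ~ levi_same (x i) (x j) &
      forall i j : 'I_n, levi_adj (x i) (x j) <->
        ((val j == (val i).+1 %% n)%N \/ (val i == (val j).+1 %% n)%N)].

Definition levi_has_induced_cycle (n : nat) : Prop :=
  exists x : 'I_n -> levi_vertex, levi_induced_cycle x.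

End Arrangements.

(* Any two curves of the same degree d >= 1 meet (weak Bezout): for a point e off both
   curves, the resultant of F and G restricted to the line through e and a point u is a
   form of degree d^2 in u, so it vanishes for some u on a fixed line.  Now take a point p
   on the largest number of curves, a curve c missing p (t_k = 0), and a point r of c
   sharing the largest number of curves with p.  Then some curve b through p misses r, and
   a point q of b and c misses some curve a through p and r; a - p - b - q - c - r is an
   induced 6-cycle of the Levi graph. *)

From HB Require Import structures.
From mathcomp Require Import all_boot all_order all_algebra.
From mathcomp Require Import reals.
From mathcomp.real_closed Require Import complex.
From mathcomp.multinomials Require Import mpoly.
From mathcomp Require Import boolp.
From mathcomp Require Import zify ring.

Set Implicit Arguments.
Unset Strict Implicit.
Unset Printing Implicit Defensive.
Import GRing.Theory.
Local Open Scope ring_scope.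

Section MpolyMap.
Variables (n : nat) (R : nzRingType).
Implicit Types (F : {mpoly R[n]}) (m : 'X_{1..n}).

Lemma mdeg_dhomog F d m : F \is d.-homog -> m \in msupp F -> (\sum_i m i)%N = d.
Proof. by move=> hF hm; rewrite -mdegE; exact: (dhomog_mf hF hm). Qed.

Lemma eq_mmap (S : nzRingType) (f1 f2 : R -> S) (h1 h2 : 'I_n -> S) F :
  f1 =1 f2 -> h1 =1 h2 -> mmap f1 h1 F = mmap f2 h2 F.
Proof.
move=> ef eh; apply: eq_bigr => m _.
by rewrite ef (mmap1_eq _ eh).
Qed.

Lemma rmorph_mmap (S S' : nzRingType) (g : {rmorphism S -> S'})
    (f : R -> S) (h : 'I_n -> S) F :
  g (mmap f h F) = mmap (g \o f) (g \o h) F.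
Proof.
rewrite rmorph_sum; apply: eq_bigr => m _.
rewrite rmorphM rmorph_prod; congr (_ * _); apply: eq_bigr => i _.
by rewrite rmorphXn.
Qed.

End MpolyMap.

Lemma meval_dhomogZ n (R : comNzRingType) (F : {mpoly R[n]}) d v c :
  F \is d.-homog -> F.@[fun i => c * v i] = c ^+ d * F.@[v].
Proof.
move=> hF; rewrite !mevalE mulr_sumr; apply: eq_big_seq => m hm.
rewrite mulrCA; congr (_ * _).
rewrite (eq_bigr (fun i => c ^+ m i * v i ^+ m i)) => [|i _]; last by rewrite exprMn.
by rewrite big_split /= prodrXr (mdeg_dhomog hF hm).
Qed.

Section TopCoefficient.
Variable S : comNzRingType.
Implicit Types A B : {poly S}.

Lemma coefM_top A B a b :
  (size A <= a.+1)%N -> (size B <= b.+1)%N -> (A * B)`_(a + b) = A`_a * B`_b.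
Proof.
move=> hA hB; rewrite coefM.
have ha : (a < (a + b).+1)%N by rewrite ltnS leq_addr.
rewrite (bigD1 (Ordinal ha)) //= big1 ?addr0 ?addKn // => j hj.
have : val j != a by apply: contra hj => /eqP ja; apply/eqP/val_inj.
rewrite neq_ltn => /orP[lt|gt].
  rewrite [B`__]nth_default ?mulr0 //; apply: leq_trans hB _.
  by case: j {hj} lt => j /= _; lia.
by rewrite [A`__]nth_default ?mul0r //; apply: leq_trans hA _.
Qed.

Lemma coef_prod_top (I : Type) (r : seq I) (P : I -> {poly S}) (dg : I -> nat) :
  (forall i, size (P i) <= (dg i).+1)%N ->
  (size (\prod_(i <- r) P i)%R <= (\sum_(i <- r) dg i).+1)%N /\
  (\prod_(i <- r) P i)%R`_(\sum_(i <- r) dg i) = \prod_(i <- r) (P i)`_(dg i).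
Proof.
move=> hP; elim: r => [|a r [IHs IHc]]; first by rewrite !big_nil size_poly1 coefC.
rewrite !big_cons; split; last by rewrite coefM_top // IHc.
apply: leq_trans (size_polyMleq _ _) _.
by move: (hP a) IHs; set x := size _; set y := size _; lia.
Qed.

Lemma size_linear_poly (c g : S) : (size (c%:P + g%:P * 'X)%R <= 2)%N.
Proof.
apply: leq_trans (size_polyD _ _) _; rewrite geq_max size_polyC; apply/andP; split.
  by case: (c != 0).
by rewrite mul_polyC; apply: leq_trans (size_scale_leq _ _) _; rewrite size_polyX.
Qed.

Lemma coef_linear_poly_exp (c g : S) k :
  (size ((c%:P + g%:P * 'X) ^+ k)%R <= k.+1)%N /\ ((c%:P + g%:P * 'X) ^+ k)`_k = g ^+ k.
Proof.
have c1 : (c%:P + g%:P * 'X)`_1 = g by rewrite coefD coefC coefMX /= add0r coefC.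
elim: k => [|k [IHs IHc]]; first by rewrite expr0 size_poly1 coefC.
rewrite exprS; split; last by rewrite -add1n coefM_top ?size_linear_poly // c1 IHc exprS.
apply: leq_trans (size_polyMleq _ _) _.
by move: (size_linear_poly c g) IHs; set x := size _; set y := size _; lia.
Qed.

End TopCoefficient.

Section LinePoly.
Variables (n : nat) (R : nzRingType) (S : comNzRingType) (f : R -> S).
Implicit Types (F : {mpoly R[n]}) (u e : 'I_n -> S).

Definition line_poly F u e : {poly S} :=
  mmap (polyC \o f) (fun i => (u i)%:P + (e i)%:P * 'X) F.

Lemma line_poly_top F d u e : F \is d.-homog ->
  (size (line_poly F u e) <= d.+1)%N /\ (line_poly F u e)`_d = mmap f e F.
Proof.
move=> hF; pose lin i : {poly S} := (u i)%:P + (e i)%:P * 'X.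
have hm m : m \in msupp F ->
    (size (mmap1 lin m) <= d.+1)%N /\ (mmap1 lin m)`_d = mmap1 e m.
  move=> hm; rewrite /mmap1 -(mdeg_dhomog hF hm).
  have [hs hc] := @coef_prod_top S _ (index_enum 'I_n) (fun i => lin i ^+ m i) m
    (fun i => proj1 (coef_linear_poly_exp _ _ _)).
  split=> //; rewrite hc; apply: eq_bigr => i _.
  exact: (proj2 (coef_linear_poly_exp _ _ _)).
split.
  rewrite /line_poly /mmap big_seq.
  elim/big_ind: _ => [|p q hp hq|m hmm]; first by rewrite size_poly0.
    by apply: leq_trans (size_polyD _ _) _; rewrite geq_max hp hq.
  rewrite /= mul_polyC; apply: leq_trans (size_scale_leq _ _) _.
  exact: (proj1 (hm m hmm)).
rewrite /line_poly /mmap coef_sum; apply: eq_big_seq => m hmm.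
by rewrite /= coefCM (proj2 (hm m hmm)).
Qed.

Lemma line_poly_lead F d u e : F \is d.-homog -> mmap f e F != 0 ->
  size (line_poly F u e) = d.+1 /\ lead_coef (line_poly F u e) = mmap f e F.
Proof.
move=> hF nz; have [hs hc] := line_poly_top u e hF.
have hd : (d < size (line_poly F u e))%N.
  by rewrite ltnNge; apply: contra nz => hsz; rewrite -hc nth_default.
have sz : size (line_poly F u e) = d.+1 by apply/eqP; rewrite eqn_leq hs hd.
by rewrite /lead_coef sz.
Qed.

End LinePoly.

Section ResultantRescale.
Variable C : fieldType.
Implicit Types p q : {poly C}.

(* [rescale_poly l d p] is l ^+ d * p(X / l) when size p <= d.+1. *)
Definition rescale_poly (l : C) d p := \poly_(i < d.+1) (l ^+ (d - i) * p`_i).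

(* Sylvester_mx with the two degrees as parameters, so that they can be rewritten. *)
Definition Sylvester_mx_of (m n : nat) p q : 'M[C]_(n + m) :=
  \matrix_(i, j) match split i with
                 | inl k => p`_(j - k) *+ (k <= j)%N
                 | inr k => q`_(j - k) *+ (k <= j)%N end.

Lemma resultantE_Sylvester_mx_of p q :
  resultant p q = \det (Sylvester_mx_of (size p).-1 (size q).-1 p q).
Proof.
by congr (\det _); apply/matrixP => i j; rewrite Sylvester_mxE mxE.
Qed.

Lemma size_rescale_poly l d p : size p = d.+1 -> size (rescale_poly l d p) = d.+1.
Proof.
move=> sp; rewrite size_poly_eq //= subnn expr0 mul1r.
have : p != 0 by rewrite -size_poly_eq0 sp.
by rewrite -lead_coef_eq0 /lead_coef sp.
Qed.

Lemma resultant_rescale p q d l : l != 0 -> size p = d.+1 -> size q = d.+1 ->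
  resultant (rescale_poly l d p) (rescale_poly l d q) = l ^+ (d * d) * resultant p q.
Proof.
move=> l0 sp sq.
rewrite !resultantE_Sylvester_mx_of !size_rescale_poly // sp sq /=.
pose blk (i : 'I_(d + d)) : nat := match split i with inl k => k | inr k => k end.
have conj_diag : Sylvester_mx_of d d (rescale_poly l d p) (rescale_poly l d q)
      *m diag_mx (\row_(j < d + d) l ^+ j)
    = diag_mx (\row_(i < d + d) l ^+ (d + blk i)) *m Sylvester_mx_of d d p q.
  apply/matrixP => i j; rewrite mul_mx_diag mul_diag_mx !mxE /blk.
  case: (split i) => k; (case: (leqP k j) => hkj; last by rewrite !mulr0n mul0r mulr0);
    rewrite !mulr1n coef_poly; (case: (ltnP (j - k) d.+1) => hjk;
    [ by rewrite mulrAC -exprD; congr (_ * _); congr (l ^+ _); lia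
    | by rewrite mul0r nth_default ?mulr0 ?sp ?sq ]).
set A := \prod_(i < d) l ^+ i.
have shifted : \prod_(i < d) l ^+ (d + i) = l ^+ (d * d) * A.
  rewrite (eq_bigr (fun i : 'I_d => l ^+ d * l ^+ i)) => [|i _]; last exact: exprD.
  by rewrite big_split /= prodr_const card_ord -exprM.
have detR : \prod_(j < d + d) (\row_(j < d + d) l ^+ j) 0 j = A * (l ^+ (d * d) * A).
  rewrite big_split_ord /= -shifted.
  by congr (_ * _); apply: eq_bigr => i _; rewrite mxE.
have detL : \prod_(j < d + d) (\row_(i < d + d) l ^+ (d + blk i)) 0 j
    = (l ^+ (d * d) * A) * (l ^+ (d * d) * A).
  rewrite big_split_ord /= -shifted; congr (_ * _); apply: eq_bigr => i _;
    by rewrite mxE /blk ?(unsplitK (inl _ i)) ?(unsplitK (inr _ i)).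
have := congr1 determinant conj_diag; rewrite !det_mulmx !det_diag detR detL => h.
have A0 : A != 0 by rewrite prodf_seq_neq0; apply/allP => i _; exact: expf_neq0.
apply: (mulIf (_ : A * (l ^+ (d * d) * A) != 0)); first by rewrite !mulf_neq0 ?expf_neq0.
by rewrite h; ring.
Qed.

End ResultantRescale.

Section Pencil.
Variables (C : closedFieldType) (n : nat).
Implicit Types (F G : {mpoly C[n]}) (u e : 'I_n -> C).

Lemma eq_poly_horner_neq0 (p q : {poly C}) :
  (forall x, x != 0 -> p.[x] = q.[x]) -> p = q.
Proof.
move=> epq; apply/eqP; rewrite -subr_eq0; apply: contraT => nz.
have [x] := closed_nonrootP _ (mulf_neq0 nz (negbT (polyX_eq0 C))).
rewrite /root hornerM hornerX hornerD hornerN mulf_eq0 negb_or => /andP[+ x0].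
by rewrite (epq x x0) subrr eqxx.
Qed.

Lemma resultant_eq0_common_root (p q : {poly C}) :
  resultant p q = 0 -> exists t, p.[t] = 0 /\ q.[t] = 0.
Proof.
move/eqP; rewrite resultant_eq0 => gcd_gt1.
have [x] : exists x, root (gcdp p q) x by apply/closed_rootP; rewrite neq_ltn gcd_gt1 orbT.
by rewrite root_gcd => /andP[/eqP px /eqP qx]; exists x.
Qed.

Definition pencil F u e : {poly C} := line_poly idfun F u e.

Lemma horner_pencil F u e t : (pencil F u e).[t] = F.@[fun i => u i + e i * t].
Proof.
rewrite -horner_evalE rmorph_mmap; apply: eq_mmap => x /=.
  by rewrite horner_evalE hornerC.
by rewrite horner_evalE hornerD hornerC hornerMX hornerC.
Qed.

Lemma pencil_lead F d u e : F \is d.-homog -> F.@[e] != 0 ->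
  size (pencil F u e) = d.+1 /\ lead_coef (pencil F u e) = F.@[e].
Proof. exact: line_poly_lead. Qed.

Lemma pencil_scale F d u e l : F \is d.-homog -> F.@[e] != 0 -> l != 0 ->
  pencil F (fun i => l * u i) e = rescale_poly l d (pencil F u e).
Proof.
move=> hF nF l0; have [sp _] := pencil_lead u hF nF.
apply: eq_poly_horner_neq0 => t _.
rewrite horner_pencil horner_poly.
have -> : F.@[fun i => l * u i + e i * t] = F.@[fun i => l * (u i + e i * (t / l))].
  by apply: meval_eq => i; field.
rewrite (meval_dhomogZ _ _ hF) -horner_pencil horner_coef sp mulr_sumr.
apply: eq_bigr => i _.
have hi : (i <= d)%N by rewrite -ltnS.
have -> : l ^+ (d - i) = l ^+ d / l ^+ i.
  by apply: (mulIf (expf_neq0 i l0)); rewrite -exprD subnK // divfK ?expf_neq0.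
by rewrite expr_div_n; field; rewrite expf_neq0.
Qed.

Definition pencil_res F G u e := resultant (pencil F u e) (pencil G u e).

Lemma pencil_resZ F G d u e l : F \is d.-homog -> G \is d.-homog ->
  F.@[e] != 0 -> G.@[e] != 0 -> l != 0 ->
  pencil_res F G (fun i => l * u i) e = l ^+ (d * d) * pencil_res F G u e.
Proof.
move=> hF hG nF nG l0; rewrite /pencil_res (pencil_scale _ hF nF l0) (pencil_scale _ hG nG l0).
by rewrite resultant_rescale // ?(proj1 (pencil_lead _ hF nF)) ?(proj1 (pencil_lead _ hG nG)).
Qed.

Lemma pencil_res_eq0 F G u e : pencil_res F G u e = 0 ->
  exists t, F.@[fun i => u i + e i * t] = 0 /\ G.@[fun i => u i + e i * t] = 0.
Proof.
by move/resultant_eq0_common_root => [t]; rewrite !horner_pencil; exists t.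
Qed.

(* F(a + Y b + X e) in C[Y][X]. *)
Definition line_pencil F a b e : {poly {poly C}} :=
  line_poly polyC F (fun i => (a i)%:P + (b i)%:P * 'X) (fun i => (e i)%:P).

Lemma line_pencil_eval F a b e s :
  map_poly (horner_eval s) (line_pencil F a b e) = pencil F (fun i => a i + b i * s) e.
Proof.
rewrite rmorph_mmap; apply: eq_mmap => x /=.
  by rewrite map_polyC /= horner_evalE hornerC.
rewrite rmorphD rmorphM /= !map_polyC map_polyX /= !horner_evalE hornerC.
by rewrite hornerD hornerMX !hornerC.
Qed.

Lemma line_pencil_lead F d a b e : F \is d.-homog -> F.@[e] != 0 ->
  lead_coef (line_pencil F a b e) = (F.@[e])%:P.
Proof.
move=> hF nF; have mmapE : mmap polyC (fun i => (e i)%:P) F = (F.@[e])%:P.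
  by rewrite -[RHS]/(polyC (mmap idfun e F)) rmorph_mmap.
have nz : mmap polyC (fun i => (e i)%:P) F != 0 by rewrite mmapE polyC_eq0.
by rewrite -mmapE; have [] := line_poly_lead (fun i => (a i)%:P + (b i)%:P * 'X) hF nz.
Qed.

Lemma horner_resultant_line_pencil F G d a b e s : F \is d.-homog -> G \is d.-homog ->
  F.@[e] != 0 -> G.@[e] != 0 ->
  (resultant (line_pencil F a b e) (line_pencil G a b e)).[s]
    = pencil_res F G (fun i => a i + b i * s) e.
Proof.
move=> hF hG nF nG; rewrite -horner_evalE map_resultant ?line_pencil_eval //.
  by rewrite (line_pencil_lead _ _ hF nF) /= horner_evalE hornerC.
by rewrite (line_pencil_lead _ _ hG nG) /= horner_evalE hornerC.
Qed.

End Pencil.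

Section WeakBezout.
Variable C : closedFieldType.
Implicit Types F G H : {mpoly C[3]}.

Lemma big_ord3 (T : Type) (idx : T) (op : Monoid.law idx) (f : 'I_3 -> T) :
  \big[op/idx]_i f i = op (op (f (inord 0)) (f (inord 1))) (f (inord 2)).
Proof.
rewrite !big_ord_recl big_ord0 Monoid.mulm1 Monoid.mulmA.
by congr (op (op (f _) (f _)) (f _)); apply/val_inj; rewrite /= inordK.
Qed.

Lemma ord3P (i : 'I_3) : [\/ i = inord 0, i = inord 1 | i = inord 2].
Proof.
case: i => [[|[|[|i]]] hi] //.
- by constructor 1; apply/val_inj; rewrite /= inordK.
- by constructor 2; apply/val_inj; rewrite /= inordK.
- by constructor 3; apply/val_inj; rewrite /= inordK.
Qed.

Lemma dhomog_nonroot H D : H \is D.-homog -> H != 0 -> exists v, H.@[v] != 0.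
Proof.
move=> hH nH.
(* Kronecker substitution: along (1, t, t ^+ D.+1) the monomials of degree D stay distinct. *)
pose E (m : 'X_{1..3}) := (m (inord 1) + m (inord 2) * D.+1)%N.
pose P : {poly C} := \sum_(m <- msupp H) H@_m *: 'X^(E m).
pose v (t : C) (i : 'I_3) := t ^+ ((val i == 1) + (val i == 2) * D.+1)%N.
have HvP t : H.@[v t] = P.[t].
  rewrite mevalE /P horner_sum; apply: eq_bigr => m _.
  rewrite hornerZ hornerXn big_ord3 /v /= !inordK // -!exprM -!exprD /E.
  by rewrite !mul0n !addn0 !add0n !mul1n mulnC.
have [m0 hm0] : exists m0, m0 \in msupp H.
  case: (msupp H) (msupp_eq0 H) nH => [<-|m0 s _ _]; first by rewrite eqxx.
  by exists m0; rewrite mem_head.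
have E_inj m : m \in msupp H -> E m = E m0 -> m = m0.
  move=> hm hE; have := mdeg_dhomog hH hm; have := mdeg_dhomog hH hm0.
  rewrite !big_ord3 /= => s0 s1.
  have e1 : m (inord 1) = m0 (inord 1).
    move: (congr1 (modn^~ D.+1) hE); rewrite /E /=.
    by rewrite ![(_ + _ * D.+1)%N]addnC !modnMDl !modn_small //; lia.
  have e2 : m (inord 2) = m0 (inord 2).
    by move: hE; rewrite /E e1 => /eqP; rewrite eqn_add2l eqn_pmul2r // => /eqP.
  by apply/mnmP => i; case: (ord3P i) => ->; lia.
have Pm0 : P`_(E m0) = H@_m0.
  rewrite /P coef_sum (bigD1_seq m0) ?msupp_uniq //= coefZ coefXn eqxx mulr1.
  rewrite big1_seq ?addr0 // => m /andP[ne hm].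
  rewrite coefZ coefXn; case: eqP => [hE|]; last by rewrite mulr0.
  by move: ne; rewrite (E_inj m hm (esym hE)) eqxx.
have P0 : P != 0 by apply: contraTneq hm0 => P0; rewrite -mcoeff_eq0 -Pm0 P0 coef0.
have [t ht] := closed_nonrootP _ P0.
by exists (v t); rewrite HvP.
Qed.

Lemma exists_generic_point F G d : F \is d.-homog -> G \is d.-homog ->
  F != 0 -> G != 0 -> exists e, [/\ F.@[e] != 0, G.@[e] != 0 & e (inord 2) != 0].
Proof.
move=> hF hG nF nG.
have hX : ('X_(inord 2) : {mpoly C[3]}) \is 1.-homog by rewrite dhomogX /= mdeg1.
have nX : ('X_(inord 2) : {mpoly C[3]}) != 0 by rewrite -msupp_eq0 msuppX.
have [v] := dhomog_nonroot (dhomogM (dhomogM hF hG) hX) (mulf_neq0 (mulf_neq0 nF nG) nX).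
by rewrite !mevalM mevalXU !mulf_eq0 !negb_or => /andP[/andP[? ?] ?]; exists v.
Qed.

Lemma dhomog_common_zero F G d : (0 < d)%N -> F \is d.-homog -> G \is d.-homog ->
  F != 0 -> G != 0 -> exists v, [/\ nonzero_pt v, on_curve F v & on_curve G v].
Proof.
move=> d0 hF hG nF nG; have [e [nFe nGe e2]] := exists_generic_point hF hG nF nG.
pose a (i : 'I_3) : C := if val i == 0%N then 1 else 0.
pose b (i : 'I_3) : C := if val i == 1%N then 1 else 0.
have line_nonzero (u : 'I_3 -> C) j t : u j = 1 -> u (inord 2) = 0 ->
    nonzero_pt (fun i => u i + e i * t).
  move=> uj u2; have [->|t0] := eqVneq t 0.
    by exists j; rewrite mulr0 addr0 uj oner_eq0.
  by exists (inord 2); rewrite u2 add0r mulf_neq0.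
have common_zero_on u j : u j = 1 -> u (inord 2) = 0 -> pencil_res F G u e = 0 ->
    exists v, [/\ nonzero_pt v, on_curve F v & on_curve G v].
  move=> uj u2 /pencil_res_eq0[t [Ft Gt]].
  by exists (fun i => u i + e i * t); split=> //; exact: line_nonzero uj u2.
set r := resultant (line_pencil F a b e) (line_pencil G a b e).
have hr s : r.[s] = pencil_res F G (fun i => a i + b i * s) e.
  exact: horner_resultant_line_pencil hF hG nFe nGe.
have [/closed_rootP[s /rootP rs] | /negPn/size_poly1P[c _ rc]] := boolP (size r != 1).
  by apply: (common_zero_on (fun i => a i + b i * s) (inord 0));
    rewrite -?hr // /a /b /= !inordK //= mul0r addr0.
(* Otherwise r is a constant c; by homogeneity the resultant along b + mu a is then
   c * mu ^+ (d * d), which vanishes at mu = 0. *)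
set r' := resultant (line_pencil F b a e) (line_pencil G b a e).
have r'E : r' = c *: 'X^(d * d).
  apply: eq_poly_horner_neq0 => mu mu0.
  rewrite (horner_resultant_line_pencil _ _ _ hF hG nFe nGe) hornerZ hornerXn.
  have -> : (fun i => b i + a i * mu) = (fun i => mu * (a i + b i * mu^-1)).
    by apply: funext => i; field.
  by rewrite (pencil_resZ _ hF hG nFe nGe mu0) -hr rc hornerC mulrC.
apply: (common_zero_on (fun i => b i + a i * 0) (inord 1)).
- by rewrite /a /b /= inordK // mulr0 addr0.
- by rewrite /a /b /= inordK // mulr0 addr0.
rewrite -(horner_resultant_line_pencil _ _ _ hF hG nFe nGe) -/r' r'E hornerZ hornerXn expr0n.
by rewrite muln_eq0 orbb eqn0Ngt d0 /= mulr0.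
Qed.

End WeakBezout.

Lemma exists_argmax_nat (T : Type) (f : T -> nat) (N : nat) (x0 : T) :
  (forall x, (f x <= N)%N) -> exists x, forall y, (f y <= f x)%N.
Proof.
move=> fN.
have exP : exists i, `[< exists x, f x = i >] by exists (f x0); apply/asboolP; exists x0.
have ubP i : `[< exists x, f x = i >] -> (i <= N)%N by move=> /asboolP[x <-].
case: (ex_maxnP exP ubP) => i /asboolP[x <-] fmax.
by exists x => y; apply: fmax; apply/asboolP; exists y.
Qed.
Arguments exists_argmax_nat {T} f {N} x0.

Section IncidenceTriangle.
Variables (I : finType) (P : Type) (on : I -> P -> Prop).

Definition incidence_triangle a b c p q r : Prop :=
  [/\ [/\ on a p, on b p & ~ on c p],
      [/\ on b q, on c q & ~ on a q] &
      [/\ on a r, on c r & ~ on b r]].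

Hypotheses (i0 : I) (meet : forall i j, exists p, on i p /\ on j p)
           (no_common_point : forall p, exists i, ~ on i p).

Let through p : {set I} := [set i | `[< on i p >]].

Let throughP p i : reflect (on i p) (i \in through p).
Proof. by rewrite inE; exact: asboolP. Qed.

(* Take p on the most curves and c missing p, then r on c sharing the most curves with p.
   Some b through p misses r (else r beats p), and a point q of b and c must miss some a
   through p and r (else q beats r). *)
Lemma exists_incidence_triangle : exists a b c p q r, incidence_triangle a b c p q r.
Proof.
have [p0 _] := meet i0 i0.
have [p p_max] := exists_argmax_nat (fun p => #|through p|) p0 (fun _ => max_card _).
have [c ncp] := no_common_point p.
have [r0 [cr0 _]] := meet c c.
have [[r cr] r_max] := exists_argmax_nat
  (fun x : {x | on c x} => #|through p :&: through (sval x)|) (exist _ r0 cr0)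
  (fun _ => max_card _).
have [b bp nbr] : exists2 b, b \in through p & b \notin through r.
  apply/subsetPn; apply: contraTN (p_max r) => sub_pr.
  rewrite -ltnNge proper_card //; apply/properP; split=> //.
  by exists c; [apply/throughP | apply/(introN (throughP _ _))].
have [q [bq cq]] := meet b c.
have [a] : exists2 a, a \in through p :&: through r & a \notin through q.
  apply/subsetPn; apply: contraTN (r_max (exist _ q cq)) => /= sub_rq.
  rewrite -ltnNge proper_card //; apply/properP; split; first by rewrite subsetI subsetIl.
  by exists b; rewrite in_setI ?(negbTE nbr) ?andbF // bp; apply/throughP.
rewrite in_setI => /andP[/throughP ap /throughP ar] /throughP naq.
move: bp nbr => /throughP bp /throughP nbr.
by exists a, b, c, p, q, r.
Qed.

End IncidenceTriangle.

Lemma on_curve_proj_eq (C : fieldType) (F : {mpoly C[3]}) d v w :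
  F \is d.-homog -> proj_eq v w -> on_curve F v -> on_curve F w.
Proof.
move=> hF [c vw] Fv; rewrite /on_curve (meval_eq _ vw).
by rewrite (meval_dhomogZ _ _ hF) Fv mulr0.
Qed.

Lemma levi_cycle_of_triangle (C : fieldType) (k d : nat) (F : 'I_k -> {mpoly C[3]})
    a b c p q r :
  (forall j, F j \is d.-homog) -> nonzero_pt p -> nonzero_pt q -> nonzero_pt r ->
  incidence_triangle (fun j v => on_curve (F j) v) a b c p q r ->
  levi_has_induced_cycle F 6.
Proof.
move=> homF np nq nr [[ap bp ncp] [bq cq naq] [ar cr nbr]].
have distinct j (u w : 'I_3 -> C) : on_curve (F j) u -> ~ on_curve (F j) w ->
    ~ proj_eq u w by move=> ju njw /(on_curve_proj_eq (homF j)) /(_ ju).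
have ab : a != b by apply: contra_notN nbr => /eqP <-.
have bc : b != c by apply: contra_notN ncp => /eqP <-.
have ac : a != c by apply: contra_notN ncp => /eqP <-.
exists (fun i : 'I_6 => match val i with
  | 0 => LCurve C a | 1 => LPoint k p | 2 => LCurve C b
  | 3 => LPoint k q | 4 => LCurve C c | _ => LPoint k r end); split=> //.
- move=> [[|[|[|[|[|[|i]]]]]] hi] //=; split=> //.
  + by exists a, b.
  + by exists b, c.
  + by exists a, c.
- move=> [[|[|[|[|[|[|i]]]]]] hi] [[|[|[|[|[|[|j]]]]]] hj] //= _;
    first [ done | by apply/eqP | by apply/eqP; rewrite eq_sym
          | exact: distinct ap naq | exact: distinct bp nbr | exact: distinct cq ncp
          | exact: distinct bq nbr | exact: distinct cr ncp | exact: distinct ar naq ].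
- move=> [[|[|[|[|[|[|i]]]]]] hi] [[|[|[|[|[|[|j]]]]]] hj] //=;
    split=> [|[]] //; tauto.
Qed.

Theorem theorem5p1 (R : realType) (d k : nat) (F : 'I_k -> {mpoly R[i][3]}) :
  d_arrangement F d -> tk_zero F -> levi_has_induced_cycle F 6.
Proof.
case=> k3 d0 smooth _ _ tk.
have homF j : F j \is d.-homog by case: (smooth j).
pose on j (x : {v | nonzero_pt v}) := on_curve (F j) (sval x).
have meet i j : exists x, on i x /\ on j x.
  have [[hi nzi _] [hj nzj _]] := (smooth i, smooth j).
  by have [v [nv ? ?]] := dhomog_common_zero d0 hi hj nzi nzj; exists (exist _ v nv).
have no_common_point x : exists j, ~ on j x.
  apply: contrapT => /forallNP all_on; apply: tk; exists (sval x).
  by split=> [|j]; [exact: svalP | exact: contrapT (all_on j)].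
have k0 : (0 < k)%N by apply: leq_trans k3.
have [a [b [c [[p np] [[q nq] [[r nr] tri]]]]]] :=
  exists_incidence_triangle (Ordinal k0) meet no_common_point.
exact: levi_cycle_of_triangle homF np nq nr tri.
Qed.
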